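(* On $R_\delta=\bigoplus_{k\ge0}R^k$, the operators $H$, $i(\alpha)$ and $X$ satisfy \[[i(\alpha),X]=H,\qquad [H,i(\alpha)]=i(\alpha),\qquad [H,X]=-X,\] hence define a representation of $sl(2,\mathbb{R})$ on $R_\delta$.
   Context: Let $n\ge1$, $M=\mathbb{R}^{2n+1}$ with coordinates $(q^1,\dots,q^n,p^1,\dots,p^n,t)$. For $\mu\in\mathbb{R}$, $\mathcal{S}^k_\mu$ denotes the space of smooth functions $S(x,\xi)$ on $M\times\mathbb{R}^{2n+1}$ homogeneous polynomial of degree $k$ in $\xi=(\xi_{q^1},\dots,\xi_{q^n},\xi_{p^1},\dots,\xi_{p^n},\xi_t)$ (symmetric contravariant tensor fields with coefficients in $\mu$-densities). Fix $\delta\in\mathbb{R}$ and set $R^k=\mathcal{S}^k_{\delta+\frac{k}{n+1}}$ for $k\ge0$, $R^{-1}=0$. Let $E_s=\sum_i(p^i\partial_{p^i}+q^i\partial_{q^i})$, $\langle E_s,\xi\rangle=\sum_i(p^i\xi_{p^i}+q^i\xi_{q^i})$, $D(S)=\sum_i(\xi_{q^i}\partial_{p^i}S-\xi_{p^i}\partial_{q^i}S)+\xi_tE_s(S)-\langle E_s,\xi\rangle\partial_tS$. Operators on $R_\delta$: $i(\alpha):R^k\to R^{k-1}$, $i(\alpha)(S)=\frac12\big(\sum_i(p^i\partial_{\xi_{q^i}}S-q^i\partial_{\xi_{p^i}}S)-\partial_{\xi_t}S\big)$; $X:R^k\to R^{k+1}$, $X(S)=D(S)+(2(n+1)\delta+k)\xi_tS$;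 and $H$ acts on $R^k$ as $h_k\,\mathrm{Id}$ with $h_k=-((n+1)\delta+k)$. *)

From HB Require Import structures.
From mathcomp Require Import all_boot all_order all_algebra.
From mathcomp Require Import all_classical all_reals all_analysis.
Set Implicit Arguments. Unset Strict Implicit. Unset Printing Implicit Defensive.
Import Order.TTheory GRing.Theory Num.Theory.
Import numFieldNormedType.Exports.
Local Open Scope ring_scope.

Section Symbols.
Variables (R : realType) (n : nat).

(* M = R^(2n+1); points x and covectors xi are row vectors of length 2n+1.
   Coordinates: q^i at index i, p^i at index n+i (i < n), t at index 2n. *)
Definition N := (n + n).+1.
Definition V := 'rV[R]_N.
Definition qi (i : 'I_n) : 'I_N := inord i.
Definition pi (i : 'I_n) : 'I_N := inord (n + i).
Definition ti : 'I_N := ord_max.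
Definition coord (v : V) (j : 'I_N) : R := v ord0 j.
Definition ev (j : 'I_N) : V := delta_mx 0 j.

Definition symb := V -> V -> R.

Fixpoint iterD (vs : seq V) (f : V -> R) : V -> R :=
  match vs with
  | [::] => f
  | v :: vs' => fun x => derive (iterD vs' f) x v
  end.
Definition smooth (f : V -> R) : Prop :=
  forall (vs : seq V) (x : V), differentiable (iterD vs f) x.

(* S is a smooth symbol homogeneous polynomial of degree k in xi
   (element of S^k_mu: the density weight mu does not affect the
   underlying function nor the operators below). *)
Definition is_symbol (k : nat) (S : symb) : Prop :=
  exists a : {ffun 'I_N -> 'I_k.+1} -> V -> R,
    (forall m, smooth (a m)) /\
    forall x xi, S x xi =
      \sum_(m : {ffun 'I_N -> 'I_k.+1} | (\sum_(j < N) (m j : nat))%N == k)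
         a m x * \prod_(j < N) coord xi j ^+ m j.

Definition dx (j : 'I_N) (S : symb) : symb :=
  fun x xi => derive (fun y => S y xi) x (ev j).
Definition dxi (j : 'I_N) (S : symb) : symb :=
  fun x xi => derive (S x) xi (ev j).

Definition Es (S : symb) : symb := fun x xi =>
  \sum_(i < n) (coord x (pi i) * dx (pi i) S x xi + coord x (qi i) * dx (qi i) S x xi).
Definition Es_xi (x xi : V) : R :=
  \sum_(i < n) (coord x (pi i) * coord xi (pi i) + coord x (qi i) * coord xi (qi i)).

Definition Dop (S : symb) : symb := fun x xi =>
  \sum_(i < n) (coord xi (qi i) * dx (pi i) S x xi - coord xi (pi i) * dx (qi i) S x xi)
  + coord xi ti * Es S x xi - Es_xi x xi * dx ti S x xi.

Definition ialpha (S : symb) : symb := fun x xi =>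
  2^-1 * (\sum_(i < n) (coord x (pi i) * dxi (qi i) S x xi
                        - coord x (qi i) * dxi (pi i) S x xi)
          - dxi ti S x xi).

(* X on R^k; the degree k is given as a real number *)
Definition Xop (delta k : R) (S : symb) : symb := fun x xi =>
  Dop S x xi + (2 * (n.+1)%:R * delta + k) * coord xi ti * S x xi.

Definition hval (delta k : R) : R := - ((n.+1)%:R * delta + k).
Definition Hop (delta k : R) (S : symb) : symb := fun x xi => hval delta k * S x xi.

End Symbols.

(* Write i(alpha) = sum_j a_j(x) d/dxi_j and D = sum_l b_l(x, xi) d/dx_l as
   vector fields acting in xi and in x respectively.  Since mixed partials
   commute, [i(alpha), D] is the first-order operator built from the
   derivatives of the coefficients.  The b_l are linear in xi and vanish at
   xi = a(x), so i(alpha) kills them; the a_j are affine in x and D a_j is the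
   coefficient of (1/2) xi.d/dxi + xi_t i(alpha).  For a symbol homogeneous of
   degree k, Euler's identity turns this into
   [i(alpha), D] = -k/2 - xi_t i(alpha), and the term (2(n+1)delta + k) xi_t
   of X supplies the rest of [i(alpha), X] = h_k.  The relations involving H
   only use that H is scalar on each R^k while i(alpha) and X shift the degree
   by -1 and +1. *)

From Pilot Require Import Defs.
From HB Require Import structures.
From mathcomp Require Import all_boot all_order all_algebra.
From mathcomp Require Import all_classical all_reals all_analysis.
From mathcomp Require Import ring lra zify.
Import Order.TTheory GRing.Theory Num.Theory.
Import numFieldNormedType.Exports.
Local Open Scope ring_scope.
Set Implicit Arguments. Unset Strict Implicit. Unset Printing Implicit Defensive.

Section Directional.
Variables (R : realType) (U : normedModType R).
Implicit Types (f g : U -> R) (a v : U).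

Lemma is_derive_line g a v d :
  (forall h : R, g (a + h *: v) = g a + h * d) -> is_derive a v g d.
Proof.
move=> gl.
have q_cst : \forall h \near dnbhs (0 : R), h^-1 *: (g (h *: v + a) - g a) = d.
  near=> h; rewrite [h *: v + a]addrC gl addrC addKr /GRing.scale /= mulrA mulVf ?mul1r //.
  by near: h; exact: nbhs_dnbhs_neq.
apply: DeriveDef; first exact: is_cvg_near_cst q_cst.
by apply: cvg_lim => //; exact: cvg_near_cst q_cst.
Unshelve. all: by end_near. Qed.

Lemma derivable_line g a v d :
  (forall h : R, g (a + h *: v) = g a + h * d) -> derivable g a v.
Proof. by move=> /is_derive_line []. Qed.

Lemma is_derive_sumr (I : Type) (r : seq I) (P : pred I) (F : I -> U -> R)
    (dF : I -> R) a v :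
  (forall i, is_derive a v (F i) (dF i)) ->
  is_derive a v (fun z => \sum_(i <- r | P i) F i z) (\sum_(i <- r | P i) dF i).
Proof.
move=> dFi; rewrite -fct_sumE.
by elim/big_ind2: _ => // *; [exact: is_derive_cst | exact: is_deriveD].
Qed.

Lemma derivable_sumr (I : Type) (r : seq I) (P : pred I) (F : I -> U -> R) a v :
  (forall i, derivable (F i) a v) ->
  derivable (fun z => \sum_(i <- r | P i) F i z) a v.
Proof.
move=> dF; have := is_derive_sumr r P (fun i => derivableP (dF i)).
by case.
Qed.

Lemma derive_sumr (I : Type) (r : seq I) (P : pred I) (F : I -> U -> R) a v :
  (forall i, derivable (F i) a v) ->
  derive (fun z => \sum_(i <- r | P i) F i z) a v = \sum_(i <- r | P i) derive (F i) a v.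
Proof.
move=> dF; have := is_derive_sumr r P (fun i => derivableP (dF i)).
by case.
Qed.

Lemma derivable_mulr f g a v : derivable f a v -> derivable g a v ->
  derivable (fun z => f z * g z) a v.
Proof. exact: derivableM. Qed.

Lemma derive_mulr f g a v : derivable f a v -> derivable g a v ->
  derive (fun z => f z * g z) a v = f a * derive g a v + g a * derive f a v.
Proof. exact: deriveM. Qed.

Lemma is_derive_sum_scale (I : Type) (r : seq I) (P : pred I) (F : I -> U -> R)
    (c : I -> R) a v :
  (forall i, derivable (F i) a v) ->
  is_derive a v (fun z => \sum_(i <- r | P i) c i * F i z)
    (\sum_(i <- r | P i) c i * derive (F i) a v).
Proof.
move=> dF; apply: is_derive_sumr => i; apply: DeriveDef.
  by apply: derivable_mulr; [exact: derivable_cst | exact: dF].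
by rewrite deriveMl.
Qed.

Lemma derive_homogeneous g (k : nat) v :
  (forall c : R, g (c *: v) = c ^+ k * g v) -> derive g v v = k%:R * g v.
Proof.
move=> hg.
have -> : derive g v v = derive (fun c : R => c ^+ k * g v) 1 1.
  rewrite /derive; suff -> : (fun h : R => h^-1 *: ((g \o shift v) (h *: v) - g v)) =
      (fun h : R => h^-1 *: (((fun c : R => c ^+ k * g v) \o shift 1) (h *: 1)
                             - 1 ^+ k * g v)) by [].
  apply/funext => h /=; rewrite -[X in h *: v + X](scale1r v) -scalerDl hg.
  by rewrite expr1n mul1r /GRing.scale /= mulr1.
rewrite deriveMr; last exact: exprn_derivable.
by rewrite exp_derive expr1n /GRing.scale /= !mulr1 mulrC.
Qed.

End Directional.

Section Coordinates.
Variables (R : realType) (n : nat).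
Local Notation I := 'I_(N n).
Local Notation coord := (@Defs.coord R n).
Implicit Types (fq fp : 'I_n -> R) (ft : R) (u v : V R n).

Lemma val_qi (i : 'I_n) : nat_of_ord (qi i : I) = i.
Proof. by rewrite /qi inordK //; have := ltn_ord i; rewrite /N; lia. Qed.

Lemma val_pi (i : 'I_n) : nat_of_ord (Defs.pi i : I) = (n + i)%N.
Proof. by rewrite /Defs.pi inordK //; have := ltn_ord i; rewrite /N; lia. Qed.

Lemma big_ord_qpt (F : I -> R) :
  \sum_(j < N n) F j = \sum_(i < n) F (qi i) + \sum_(i < n) F (Defs.pi i) + F (ti n).
Proof.
rewrite /N big_ord_recr /= big_split_ord /=.
by congr (_ + _ + _); apply: eq_bigr => i _; congr F; apply: val_inj;
  rewrite /= ?val_qi ?val_pi.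
Qed.

Definition qpt fq fp ft (j : I) : R :=
  if insub (j : nat) is Some i then fq i
  else if insub (j - n)%N is Some i then fp i else ft.

Lemma qpt_qi fq fp ft i : qpt fq fp ft (qi i) = fq i.
Proof. by rewrite /qpt val_qi valK. Qed.

Lemma qpt_pi fq fp ft i : qpt fq fp ft (Defs.pi i) = fp i.
Proof. by rewrite /qpt val_pi insubN -?leqNgt ?leq_addr // addKn valK. Qed.

Lemma qpt_ti fq fp ft : qpt fq fp ft (ti n) = ft.
Proof. by rewrite /qpt /= insubN -?leqNgt ?leq_addr // addKn insubN // ltnn. Qed.

Lemma qpt_restrict (f : I -> R) j :
  qpt (fun i => f (qi i)) (fun i => f (Defs.pi i)) (f (ti n)) j = f j.
Proof.
rewrite /qpt; case: insubP => [i _ ji | jn].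
  by congr f; apply: val_inj; rewrite /= val_qi ji.
case: insubP => [i _ ji | jn']; congr f; apply: val_inj; rewrite /= ?val_pi ?ji.
  by move: jn; rewrite -leqNgt => /subnKC.
by move: jn jn'; have := ltn_ord j; rewrite /N; lia.
Qed.

Lemma qpt_comb (c d : R) fq fp ft fq' fp' ft' j :
  c * qpt fq fp ft j + d * qpt fq' fp' ft' j =
  qpt (fun i => c * fq i + d * fq' i) (fun i => c * fp i + d * fp' i) (c * ft + d * ft') j.
Proof. by rewrite /qpt; case: insub => [i|] //; case: insub. Qed.

Lemma qpt0 j : qpt (fun=> 0) (fun=> 0) 0 j = 0.
Proof. by rewrite /qpt; case: insub => [i|] //; case: insub. Qed.

Lemma sum_qptM fq fp ft (G : I -> R) :
  \sum_(j < N n) qpt fq fp ft j * G j =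
  \sum_(i < n) fq i * G (qi i) + \sum_(i < n) fp i * G (Defs.pi i) + ft * G (ti n).
Proof.
rewrite big_ord_qpt qpt_ti; congr (_ + _ + _); apply: eq_bigr => i _.
  by rewrite qpt_qi.
by rewrite qpt_pi.
Qed.

Lemma coord_line u v (h : R) j : coord (u + h *: v) j = coord u j + h * coord v j.
Proof. by rewrite /Defs.coord !mxE. Qed.

Lemma coord_row (c : I -> R) l : coord (\row_j c j) l = c l.
Proof. by rewrite /Defs.coord mxE. Qed.

Lemma sum_linear_ev (g : V R n -> R) (c : I -> R) :
  (forall u v (h : R), g (u + h *: v) = g u + h * g v) ->
  \sum_(j < N n) c j * g (ev R j) = g (\row_j c j).
Proof.
move=> gl; have g0 : g 0 = 0.
  by have := gl 0 0 1; rewrite scale1r addr0 mul1r; lra.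
have gD : {morph g : u v / u + v}.
  by move=> u v; rewrite -[v]scale1r gl mul1r scale1r.
rewrite [in RHS](row_sum_delta (\row_j c j)) (big_morph g gD g0).
by apply: eq_bigr => j _; rewrite -[_ *: _]add0r gl g0 add0r mxE.
Qed.

Lemma euler_homogeneous (g : V R n -> R) (k : nat) xi :
  differentiable g xi -> (forall c : R, g (c *: xi) = c ^+ k * g xi) ->
  \sum_(j < N n) coord xi j * derive g xi (ev R j) = k%:R * g xi.
Proof.
move=> dg hg; rewrite -derive_homogeneous // (deriveE _ dg).
rewrite [X in 'd g xi X]row_sum_delta linear_sum; apply: eq_bigr => j _.
by rewrite linearZ /= (deriveE _ dg).
Qed.

End Coordinates.

Section VectorFields.
Variables (R : realType) (n : nat).
Local Notation I := 'I_(N n).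
Local Notation V := (V R n).
Local Notation symb := (symb R n).

Definition xi_field (a : I -> V -> R) (S : symb) : symb :=
  fun x xi => \sum_(j < N n) a j x * dxi j S x xi.
Definition x_field (b : I -> symb) (S : symb) : symb :=
  fun x xi => \sum_(l < N n) b l x xi * dx l S x xi.

Lemma xi_field_linear (a : I -> V -> R) (F : symb) x xi :
  (forall u v (h : R), F x (u + h *: v) = F x u + h * F x v) ->
  xi_field a F x xi = F x (\row_j a j x).
Proof.
move=> Fl; rewrite /xi_field -sum_linear_ev //; apply: eq_bigr => j _.
by congr (_ * _); apply: derive_val; apply: is_derive_line => h; rewrite Fl.
Qed.

Lemma x_field_affine (b : I -> symb) (F : V -> R) (L : V -> R) x xi :
  (forall u v (h : R), F (u + h *: v) = F u + h * L v) ->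
  (forall u v (h : R), L (u + h *: v) = L u + h * L v) ->
  x_field b (fun y _ => F y) x xi = L (\row_l b l x xi).
Proof.
move=> Fl Ll; rewrite /x_field -sum_linear_ev //; apply: eq_bigr => l _.
by congr (_ * _); apply: derive_val; apply: is_derive_line => h; rewrite Fl.
Qed.

Section LeibnizRules.
Variables (a : I -> V -> R) (b : I -> symb) (F G : symb) (x xi : V).
Hypothesis F_derivable : forall v, derivable (F x) xi v.
Hypothesis G_derivable : forall v, derivable (G x) xi v.

Lemma xi_fieldD :
  xi_field a (fun x xi => F x xi + G x xi) x xi = xi_field a F x xi + xi_field a G x xi.
Proof.
rewrite /xi_field -big_split; apply: eq_bigr => j _.
by rewrite {1}/dxi deriveD; [rewrite mulrDr | exact: F_derivable | exact: G_derivable].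
Qed.

Lemma xi_fieldM :
  xi_field a (fun x xi => F x xi * G x xi) x xi =
  F x xi * xi_field a G x xi + G x xi * xi_field a F x xi.
Proof.
rewrite /xi_field /dxi !mulr_sumr -big_split /=; apply: eq_bigr => j _.
rewrite derive_mulr; [ring | exact: F_derivable | exact: G_derivable].
Qed.

Lemma xi_fieldZ (c : R) :
  xi_field a (fun x xi => c * F x xi) x xi = c * xi_field a F x xi.
Proof.
rewrite /xi_field mulr_sumr; apply: eq_bigr => j _.
by rewrite {1}/dxi deriveMl; [rewrite mulrCA | exact: F_derivable].
Qed.

Lemma x_field_derivable :
  (forall l v, derivable (b l x) xi v) -> (forall l v, derivable (dx l F x) xi v) ->
  forall v, derivable (x_field b F x) xi v.
Proof.
move=> db dF v; apply: derivable_sumr => l.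
by apply: derivable_mulr; [exact: db | exact: dF].
Qed.

End LeibnizRules.

Lemma x_fieldZ (b : I -> symb) (F : symb) (c : R) x xi :
  (forall v, derivable (fun y => F y xi) x v) ->
  x_field b (fun x xi => c * F x xi) x xi = c * x_field b F x xi.
Proof.
move=> dF; rewrite /x_field mulr_sumr; apply: eq_bigr => l _.
by rewrite {1}/dx deriveMl; [rewrite mulrCA | exact: dF].
Qed.

Section Commutator.
Variables (a : I -> V -> R) (b : I -> symb) (S : symb).
Hypothesis a_derivable : forall j x v, derivable (a j) x v.
Hypothesis b_derivable : forall l x xi v, derivable (b l x) xi v.
Hypothesis dxS_derivable : forall l x xi v, derivable (dx l S x) xi v.
Hypothesis dxiS_derivable : forall j x xi v, derivable (fun y => dxi j S y xi) x v.
Hypothesis dxi_dx : forall l j x xi, dxi j (dx l S) x xi = dx l (dxi j S) x xi.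

(* The second derivatives cancel by [dxi_dx]; only the derivatives of the
   coefficients survive. *)
Lemma xi_field_x_fieldC x xi :
  xi_field a (x_field b S) x xi - x_field b (xi_field a S) x xi =
  \sum_(l < N n) xi_field a (b l) x xi * dx l S x xi
  - \sum_(j < N n) x_field b (fun y _ => a j y) x xi * dxi j S x xi.
Proof.
have dxi_x_field j : dxi j (x_field b S) x xi =
    \sum_(l < N n) (b l x xi * dx l (dxi j S) x xi + dx l S x xi * dxi j (b l) x xi).
  rewrite {1}/dxi /x_field derive_sumr => [|l]; last exact: derivable_mulr.
  apply: eq_bigr => l _; rewrite -dxi_dx.
  by rewrite derive_mulr; [reflexivity | exact: b_derivable | exact: dxS_derivable].
have dx_xi_field l : dx l (xi_field a S) x xi =
    \sum_(j < N n) (a j x * dx l (dxi j S) x xi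
                    + dxi j S x xi * dx l (fun y _ => a j y) x xi).
  rewrite {1}/dx /xi_field derive_sumr => [|j]; last exact: derivable_mulr.
  apply: eq_bigr => j _.
  by rewrite derive_mulr; [reflexivity | exact: a_derivable | exact: dxiS_derivable].
rewrite [xi_field a _ x xi]/xi_field [x_field b _ x xi]/x_field.
under [X in X - _ = _]eq_bigr => j _ do rewrite dxi_x_field mulr_sumr.
under [X in _ - X = _]eq_bigr => l _ do rewrite dx_xi_field mulr_sumr.
rewrite [X in _ - X = _]exchange_big /= -sumrB.
under [X in _ = X - _]eq_bigr => l _ do rewrite /xi_field mulr_suml.
under [X in _ = _ - X]eq_bigr => j _ do rewrite /x_field mulr_suml.
rewrite [X in _ = X - _]exchange_big /= -sumrB.
apply: eq_bigr => j _; rewrite -!sumrB; apply: eq_bigr => l _.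
ring.
Qed.

End Commutator.
End VectorFields.

Section Operators.
Variables (R : realType) (n : nat).
Local Notation I := 'I_(N n).
Local Notation V := (V R n).
Local Notation symb := (symb R n).
Local Notation coord := (@Defs.coord R n).
Local Notation p i := (Defs.pi i).
Local Notation t := (ti n).
Local Notation Es_xi := (@Es_xi R n).

Definition alpha_coef (j : I) (x : V) : R :=
  qpt (fun i => 2^-1 * coord x (p i)) (fun i => - (2^-1 * coord x (qi i))) (- 2^-1) j.
Definition alpha_lin (j : I) (v : V) : R :=
  qpt (fun i => 2^-1 * coord v (p i)) (fun i => - (2^-1 * coord v (qi i))) 0 j.
Definition Dop_coef (l : I) : symb := fun x xi =>
  qpt (fun i => - coord xi (p i) + coord xi t * coord x (qi i))
      (fun i => coord xi (qi i) + coord xi t * coord x (p i)) (- Es_xi x xi) l.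

Lemma ialpha_xi_field : @ialpha R n = xi_field alpha_coef.
Proof.
apply/funext => S; apply/funext => x; apply/funext => xi.
rewrite /ialpha /xi_field sum_qptM mulrBr mulr_sumr -big_split /=.
by congr (_ + _); [apply: eq_bigr => i _ |]; ring.
Qed.

Lemma Dop_x_field : @Dop R n = x_field Dop_coef.
Proof.
apply/funext => S; apply/funext => x; apply/funext => xi.
rewrite /Dop /Es /x_field sum_qptM mulr_sumr -!big_split /=.
by congr (_ + _); [apply: eq_bigr => i _ |]; ring.
Qed.

Lemma Es_xi_line x u v (h : R) : Es_xi x (u + h *: v) = Es_xi x u + h * Es_xi x v.
Proof.
rewrite /Es_xi mulr_sumr -big_split /=; apply: eq_bigr => i _.
by rewrite !coord_line; ring.
Qed.

Lemma Dop_coef_line l x u v (h : R) :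
  Dop_coef l x (u + h *: v) = Dop_coef l x u + h * Dop_coef l x v.
Proof.
rewrite -[Dop_coef l x u]mul1r /Dop_coef qpt_comb Es_xi_line.
by congr qpt; [apply/funext => i; rewrite !coord_line .. | ]; ring.
Qed.

Lemma alpha_lin_line j u v (h : R) :
  alpha_lin j (u + h *: v) = alpha_lin j u + h * alpha_lin j v.
Proof.
rewrite -[alpha_lin j u]mul1r /alpha_lin qpt_comb.
by congr qpt; [apply/funext => i; rewrite !coord_line .. | ]; ring.
Qed.

Lemma alpha_coef_line j u v (h : R) :
  alpha_coef j (u + h *: v) = alpha_coef j u + h * alpha_lin j v.
Proof.
rewrite -[alpha_coef j u]mul1r /alpha_coef /alpha_lin qpt_comb.
by congr qpt; [apply/funext => i; rewrite !coord_line .. | ]; ring.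
Qed.

(* As [Dop_coef l x] is linear, this says that [i(alpha)] kills the
   coefficients of [D]. *)
Lemma Dop_coef_alpha l x : Dop_coef l x (\row_j alpha_coef j x) = 0.
Proof.
rewrite /Dop_coef -(qpt0 R l) /Es_xi; congr qpt.
- by apply/funext => i; rewrite !coord_row /alpha_coef qpt_pi qpt_ti; ring.
- by apply/funext => i; rewrite !coord_row /alpha_coef qpt_qi qpt_ti; ring.
rewrite big1 ?oppr0 // => i _.
by rewrite !coord_row /alpha_coef qpt_pi qpt_qi; ring.
Qed.

(* The derivatives of the coefficients of [i(alpha)] along [D]. *)
Lemma alpha_lin_Dop_coef x xi j :
  alpha_lin j (\row_l Dop_coef l x xi) = 2^-1 * coord xi j + coord xi t * alpha_coef j x.
Proof.
rewrite -[coord xi j](qpt_restrict (coord xi)) qpt_comb /alpha_lin.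
by congr qpt; [apply/funext => i; rewrite coord_row /Dop_coef ?qpt_pi ?qpt_qi .. |]; ring.
Qed.

Lemma sum_alpha_lin_Dop_coef x xi (G : I -> R) :
  \sum_(j < N n) alpha_lin j (\row_l Dop_coef l x xi) * G j =
  2^-1 * \sum_(j < N n) coord xi j * G j + coord xi t * \sum_(j < N n) alpha_coef j x * G j.
Proof.
rewrite !mulr_sumr -big_split /=; apply: eq_bigr => j _.
by rewrite alpha_lin_Dop_coef; ring.
Qed.

End Operators.

Arguments alpha_coef {R n} j x.
Arguments alpha_lin {R n} j v.
Arguments Dop_coef {R n} l x xi.

Section RegularSymbols.
Variables (R : realType) (n : nat).
Local Notation coord := (@Defs.coord R n).

(* The analytic properties of a symbol of degree [k] used by the commutator
   computation; homogeneity only enters through the Euler identity. *)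
Record regular_symbol (k : nat) (S : symb R n) : Prop := RegularSymbol {
  regular_derivable_xi : forall x xi v, derivable (S x) xi v;
  regular_derivable_x : forall x xi v, derivable (fun y => S y xi) x v;
  regular_dx_derivable : forall l x xi v, derivable (dx l S x) xi v;
  regular_dxi_derivable : forall j x xi v, derivable (fun y => dxi j S y xi) x v;
  regular_dxi_dx : forall l j x xi, dxi j (dx l S) x xi = dx l (dxi j S) x xi;
  regular_euler : forall x xi, \sum_(j < N n) coord xi j * dxi j S x xi = k%:R * S x xi
}.

End RegularSymbols.

Section Relations.
Variables (R : realType) (n k : nat) (S : symb R n).
Local Notation coord := (@Defs.coord R n).
Local Notation t := (ti n).
Hypothesis S_regular : regular_symbol k S.

Lemma Dop_derivable_xi x xi v : derivable (Dop S x) xi v.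
Proof.
rewrite Dop_x_field; apply: x_field_derivable => l w.
  by apply: derivable_line => h; rewrite Dop_coef_line.
exact: regular_dx_derivable S_regular l x xi w.
Qed.

Lemma ialpha_DopC x xi :
  ialpha (Dop S) x xi - Dop (ialpha S) x xi =
  - (2^-1 * k%:R) * S x xi - coord xi t * ialpha S x xi.
Proof.
case: S_regular => _ _ dxS dxiS dxi_dx euler.
rewrite ialpha_xi_field Dop_x_field xi_field_x_fieldC; first last.
- exact: dxi_dx.
- exact: dxiS.
- exact: dxS.
- by move=> l y eta v; apply: derivable_line => h; rewrite Dop_coef_line.
- by move=> j y v; apply: derivable_line => h; rewrite alpha_coef_line.
rewrite big1 => [|l _]; last first.
  by rewrite xi_field_linear ?Dop_coef_alpha ?mul0r // => u v h; rewrite Dop_coef_line.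
under eq_bigr => j _ do
  rewrite (x_field_affine _ _ _ (alpha_coef_line j) (alpha_lin_line j)).
rewrite (sum_alpha_lin_Dop_coef x xi (fun j => dxi j S x xi)) euler /xi_field.
ring.
Qed.

Lemma ialpha_XopC delta x xi :
  ialpha (Xop delta k%:R S) x xi - Xop delta (k%:R - 1) (ialpha S) x xi
  = Hop delta k%:R S x xi.
Proof.
pose K := 2 * (n.+1)%:R * delta + k%:R.
have Kt_line u v (h : R) : K * coord (u + h *: v) t = K * coord u t + h * (K * coord v t).
  by rewrite coord_line; ring.
have ialpha_X : ialpha (Xop delta k%:R S) x xi =
    ialpha (Dop S) x xi + K * (coord xi t * ialpha S x xi - 2^-1 * S x xi).
  rewrite ialpha_xi_field /Xop (xi_fieldD alpha_coef (F := Dop S)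
    (G := fun x xi => K * coord xi t * S x xi)) => [| v | v]; last 2 first.
  - exact: Dop_derivable_xi.
  - apply: derivable_mulr; last exact: regular_derivable_xi S_regular x xi v.
    by apply: derivable_line => h; rewrite Kt_line.
  rewrite (xi_fieldM alpha_coef (F := fun _ xi => K * coord xi t) (G := S))
    => [| v | v]; last 2 first.
  - by apply: derivable_line => h; rewrite Kt_line.
  - exact: regular_derivable_xi S_regular x xi v.
  rewrite (xi_field_linear alpha_coef (F := fun _ xi => K * coord xi t)) //.
  by rewrite coord_row /alpha_coef qpt_ti; ring.
rewrite ialpha_X /Xop /Hop /hval.
rewrite -[ialpha (Dop S) x xi](subrK (Dop (ialpha S) x xi)) ialpha_DopC.
by rewrite /K; field.
Qed.

Lemma ialpha_HopC delta x xi :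
  Hop delta (k%:R - 1) (ialpha S) x xi - ialpha (Hop delta k%:R S) x xi = ialpha S x xi.
Proof.
rewrite [in ialpha (Hop _ _ _)]ialpha_xi_field /Hop xi_fieldZ -?ialpha_xi_field /hval.
  by ring.
exact: regular_derivable_xi S_regular x xi.
Qed.

Lemma Xop_HopC delta x xi :
  Hop delta (k%:R + 1) (Xop delta k%:R S) x xi - Xop delta k%:R (Hop delta k%:R S) x xi
  = - Xop delta k%:R S x xi.
Proof.
rewrite /Xop {2}Dop_x_field /Hop x_fieldZ -?Dop_x_field /hval.
  by ring.
exact: regular_derivable_x S_regular x xi.
Qed.

End Relations.

Section SeparatedSymbols.
Variables (R : realType) (n : nat) (J : finType) (P : pred J) (f g : J -> V R n -> R).
Local Notation V := (V R n).
Variable S : symb R n.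
Hypothesis f_differentiable : forall m x, differentiable (f m) x.
Hypothesis g_differentiable : forall m xi, differentiable (g m) xi.
Hypothesis S_separated : forall x xi, S x xi = \sum_(m | P m) f m x * g m xi.

Let f_derivable m x v : derivable (f m) x v := diff_derivable (f_differentiable m x).
Let g_derivable m xi v : derivable (g m) xi v := diff_derivable (g_differentiable m xi).

Lemma is_derive_separated_xi x xi v :
  is_derive xi v (S x) (\sum_(m | P m) f m x * derive (g m) xi v).
Proof.
have -> : S x = fun z => \sum_(m | P m) f m x * g m z.
  by apply/funext => z; rewrite S_separated.
exact: is_derive_sum_scale.
Qed.

Lemma is_derive_separated_x x xi v :
  is_derive x v (fun y => S y xi) (\sum_(m | P m) g m xi * derive (f m) x v).
Proof.
have -> : (fun y => S y xi) = fun y => \sum_(m | P m) g m xi * f m y.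
  by apply/funext => y; rewrite S_separated; apply: eq_bigr => m _; rewrite mulrC.
exact: is_derive_sum_scale.
Qed.

Lemma dx_separated l x : dx l S x = fun z => \sum_(m | P m) derive (f m) x (ev R l) * g m z.
Proof.
apply/funext => z; rewrite /dx; have [_ ->] := is_derive_separated_x x z (ev R l).
by apply: eq_bigr => m _; rewrite mulrC.
Qed.

Lemma dxi_separated j xi :
  (fun y => dxi j S y xi) = fun y => \sum_(m | P m) derive (g m) xi (ev R j) * f m y.
Proof.
apply/funext => y; rewrite /dxi; have [_ ->] := is_derive_separated_xi y xi (ev R j).
by apply: eq_bigr => m _; rewrite mulrC.
Qed.

Lemma separated_regular (k : nat) :
  (forall m, P m -> forall (c : R) xi, g m (c *: xi) = c ^+ k * g m xi) ->
  regular_symbol k S.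
Proof.
move=> g_homogeneous; split.
- by move=> x xi v; have [] := is_derive_separated_xi x xi v.
- by move=> x xi v; have [] := is_derive_separated_x x xi v.
- move=> l x xi v; rewrite dx_separated.
  by have [] := is_derive_sum_scale (index_enum J) P (fun m => derive (f m) x (ev R l))
    (fun m => @g_derivable m xi v).
- move=> j x xi v; rewrite dxi_separated.
  by have [] := is_derive_sum_scale (index_enum J) P (fun m => derive (g m) xi (ev R j))
    (fun m => @f_derivable m x v).
- move=> l j x xi; rewrite {1}/dxi dx_separated /dx dxi_separated.
  have [_ ->] := is_derive_sum_scale (index_enum J) P (fun m => derive (f m) x (ev R l))
    (fun m => @g_derivable m xi (ev R j)).
  have [_ ->] := is_derive_sum_scale (index_enum J) P (fun m => derive (g m) xi (ev R j))
    (fun m => @f_derivable m x (ev R l)).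
  by apply: eq_bigr => m _; rewrite mulrC.
move=> x xi; apply: euler_homogeneous.
  rewrite (_ : S x = \sum_(m | P m) (fun z => f m x * g m z)); last first.
    by rewrite fct_sumE; apply/funext => z; rewrite S_separated.
  elim/big_ind: _ => [|F G dF dG|m _]; first exact: differentiable_cst.
    exact: differentiableD.
  by apply: differentiableM; [exact: differentiable_cst | exact: g_differentiable].
move=> c; rewrite !S_separated mulr_sumr; apply: eq_bigr => m Pm.
by rewrite g_homogeneous // mulrCA.
Qed.

End SeparatedSymbols.

Section Monomials.
Variables (R : realType) (n k : nat).
Local Notation V := (V R n).
Local Notation coord := (@Defs.coord R n).

Definition monomial (m : {ffun 'I_(N n) -> 'I_k.+1}) (xi : V) : R :=
  \prod_(j < N n) coord xi j ^+ m j.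

Lemma differentiable_monomial m xi : differentiable (monomial m) xi.
Proof.
rewrite /monomial -(fct_prodE _ _ (fun j xi => coord xi j ^+ m j)).
elim/big_ind: _ => [|F G dF dG|j _]; first exact: differentiable_cst.
  exact: differentiableM.
case: (nat_of_ord (m j)) => [|e].
  by rewrite (_ : (fun _ => _) = cst 1); [exact: differentiable_cst | apply/funext].
have -> : (fun xi : V => coord xi j ^+ e.+1) = (fun xi : V => coord xi j) ^+ e.+1.
  by apply/funext => z; rewrite exprfctE.
exact/differentiableX/differentiable_coord.
Qed.

Lemma monomial_homogeneous m (c : R) xi :
  monomial m (c *: xi) = c ^+ (\sum_(j < N n) m j) * monomial m xi.
Proof.
rewrite /monomial -prodrXr -big_split; apply: eq_bigr => j _.
by rewrite /Defs.coord mxE exprMn.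
Qed.

End Monomials.

Lemma is_symbol_regular (R : realType) (n k : nat) (S : symb R n) :
  is_symbol k S -> regular_symbol k S.
Proof.
move=> [a [a_smooth S_poly]].
apply: (@separated_regular _ _ _ _ a (@monomial R n k) _ _ _ S_poly).
- by move=> m x; exact: (a_smooth m [::] x).
- exact: differentiable_monomial.
by move=> m /eqP deg_m c xi; rewrite monomial_homogeneous deg_m.
Qed.

Theorem proposition4p2 (R : realType) (n : nat) (hn : (1 <= n)%N)
  (delta : R) (k : nat) (S : symb R n) :
  is_symbol k S ->
  [/\ (* [i(alpha), X] = H *)
      (forall x xi,
         ialpha (Xop delta k%:R S) x xi - Xop delta (k%:R - 1) (ialpha S) x xi
         = Hop delta k%:R S x xi),
      (* [H, i(alpha)] = i(alpha) *)
      (forall x xi,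
         Hop delta (k%:R - 1) (ialpha S) x xi - ialpha (Hop delta k%:R S) x xi
         = ialpha S x xi)
    & (* [H, X] = -X *)
      (forall x xi,
         Hop delta (k%:R + 1) (Xop delta k%:R S) x xi - Xop delta k%:R (Hop delta k%:R S) x xi
         = - Xop delta k%:R S x xi)].
Proof.
move=> /is_symbol_regular S_regular.
split=> x xi; [exact: ialpha_XopC | exact: ialpha_HopC | exact: Xop_HopC].
Qed.
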